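(* Let $\mathcal{A}\subset\mathbb{C}^n$ be a centrosymmetric set of atoms whose convex hull is compact and contains a ball of positive radius around the origin. Let $x^\star\in\mathbb{C}^n$, let $w$ be a random vector in $\mathbb{C}^n$ with $\mathbb{E}\|w\|_{\mathcal{A}}^*<\infty$, and suppose there is a function $\delta$ such that $P(\|w\|_{\mathcal{A}}^*\ge\mathbb{E}\|w\|_{\mathcal{A}}^*+t)<\delta(t)$ for all $t>0$. Let $\tau>0$, $y=x^\star+w$, and let $\hat{x}$ be the solution of $$\operatorname*{minimize}_{x\in\mathbb{C}^n}\ \tfrac{1}{2}\|x-y\|_2^2+\tau\|x\|_{\mathcal{A}}.$$ For $\gamma\in[0,1]$ define the cone $$C_\gamma(x^\star,\mathcal{A})=\operatorname{cone}\left(\{z:\|x^\star+z\|_{\mathcal{A}}\le\|x^\star\|_{\mathcal{A}}+\gamma\|z\|_{\mathcal{A}}\}\right)$$ and $$\phi_\gamma(x^\star,\mathcal{A})=\inf\left\{\frac{\|z\|_2}{\|z\|_{\mathcal{A}}}: z\in C_\gamma(x^\star,\mathcal{A})\right\}.$$ Suppose $\phi_\gamma(x^\star,\mathcal{A})>0$ for some $\gamma\in[0,1]$ with $\gamma>\mathbb{E}\|w\|_{\mathcal{A}}^*/\tau$. Then $$\|\hat{x}-x^\star\|_2^2\le\frac{(1+\gamma)^2\tau^2}{\gamma^2\,\phi_\gamma(x^\star,\mathcal{A})^2}$$ with probability at least $1-\delta(\gamma\tau-\mathbb{E}\|w\|_{\mathcal{A}}^* )$.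
   Context: The atomic norm is the gauge $\|x\|_{\mathcal{A}}=\inf\{t>0: x\in t\,\operatorname{conv}(\mathcal{A})\}$. The real inner product on $\mathbb{C}^n$ is $\langle x,z\rangle=\operatorname{Re}(z^*x)$. The dual atomic norm is $\|z\|_{\mathcal{A}}^*=\sup_{a\in\mathcal{A}}\langle z,a\rangle$. $\operatorname{cone}(X)$ denotes the conic hull $\{\lambda x:\lambda\ge0,x\in X\}$; in the infimum defining $\phi_\gamma$, $z$ ranges over nonzero elements. *)

(* C^n is modelled as 'rV[R[i]]_n with
   R : realType and R[i] the complex numbers of mathcomp-real-closed. *)
From HB Require Import structures.
From mathcomp Require Import all_boot all_order all_algebra.
From mathcomp Require Import all_classical all_reals.
From mathcomp Require Import all_analysis.
From mathcomp Require Import complex.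
Set Implicit Arguments. Unset Strict Implicit. Unset Printing Implicit Defensive.
Import Order.TTheory GRing.Theory Num.Theory numFieldNormedType.Exports.
Local Open Scope classical_set_scope.
Local Open Scope ring_scope.

Section AtomicDefs.
Variables (R : realType) (n : nat).

Definition Cvec := 'rV[R[i]]_n.

Definition rC (c : R) : R[i] := Complex c 0.

(* real inner product <x,z> = Re(z^* x) *)
Definition rinner (x z : Cvec) : R :=
  \sum_(j < n) (complex.Re (x ord0 j) * complex.Re (z ord0 j) + complex.Im (x ord0 j) * complex.Im (z ord0 j)).

Definition l2norm (x : Cvec) : R := Num.sqrt (rinner x x).

Definition convhull (A : set Cvec) : set Cvec :=
  [set x | exists (k : nat) (c : 'I_k -> R) (a : 'I_k -> Cvec),
      (forall i, 0 <= c i) /\ \sum_(i < k) c i = 1 /\ (forall i, A (a i)) /\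
      x = \sum_(i < k) rC (c i) *: a i].

Definition atomic_norm (A : set Cvec) (x : Cvec) : R :=
  inf [set t : R | 0 < t /\ exists y, convhull A y /\ x = rC t *: y].

Definition dual_atomic_norm (A : set Cvec) (z : Cvec) : R :=
  sup [set rinner z a | a in A].

(* identification C^n ~ R^(2n) (real and imaginary parts), giving the
   standard topology on C^n *)
Definition realify (x : Cvec) : 'rV[R]_(n + n) :=
  row_mx (\row_j complex.Re (x ord0 j)) (\row_j complex.Im (x ord0 j)).

Definition centrosymmetric (A : set Cvec) : Prop :=
  forall a, A a -> A (- a).

Definition conic_hull (X : set Cvec) : set Cvec :=
  [set z | exists (l : R) (x : Cvec), 0 <= l /\ X x /\ z = rC l *: x].

Definition C_gamma (gamma : R) (xs : Cvec) (A : set Cvec) : set Cvec :=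
  conic_hull [set z | atomic_norm A (xs + z) <= atomic_norm A xs + gamma * atomic_norm A z].

Definition phi_gamma (gamma : R) (xs : Cvec) (A : set Cvec) : R :=
  inf [set l2norm z / atomic_norm A z | z in [set z | C_gamma gamma xs A z /\ z != 0]].

Definition is_AST_solution (A : set Cvec) (tau : R) (y xh : Cvec) : Prop :=
  forall x, 2^-1 * l2norm (xh - y) ^+ 2 + tau * atomic_norm A xh
            <= 2^-1 * l2norm (x - y) ^+ 2 + tau * atomic_norm A x.

End AtomicDefs.

From HB Require Import structures.
From mathcomp Require Import all_boot all_order all_algebra.
From mathcomp Require Import all_classical all_reals.
From mathcomp Require Import all_analysis.
From mathcomp Require Import complex.
From mathcomp Require Import ring lra.
From mathcomp Require Import measurable_realfun.
Set Implicit Arguments. Unset Strict Implicit. Unset Printing Implicit Defensive.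
Import Order.TTheory GRing.Theory Num.Theory numFieldNormedType.Exports.
Local Open Scope classical_set_scope.
Local Open Scope ring_scope.

(* Write z = xh - xs. The optimality condition of the denoising problem gives
   ||z||_2^2 <= <w, z> + tau (||xs||_A - ||xh||_A). On the event
   ||w||_A^* < gamma tau we have <w, z> <= gamma tau ||z||_A, which puts z in the
   cone C_gamma and, with the triangle inequality for ||.||_A, yields
   ||z||_2^2 <= (1 + gamma) tau ||z||_A <= (1 + gamma) tau ||z||_2 / phi_gamma;
   this is even stronger than the claimed bound, by a factor gamma. The tail
   bound on ||w||_A^* controls the complementary event. Both events are
   measurable because ||w||_A^* and ||xh - xs||_2 are Lipschitz functions of w,
   the latter since the denoiser is nonexpansive. *)

Section RealInnerProduct.
Variables (R : realType) (n : nat).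
Local Notation V := (Cvec R n).
Implicit Types (u v a : V) (c : R).

Lemma rCM c1 c2 : rC (c1 * c2) = rC c1 * rC c2.
Proof. by rewrite /rC /=; congr Complex; ring. Qed.

Lemma rC1B c : rC (1 - c) = 1 - rC c.
Proof. by rewrite /rC /=; congr Complex; ring. Qed.

Lemma Re_rCM c (x : R[i]) : complex.Re (rC c * x) = c * complex.Re x.
Proof. by case: x => ? ?; rewrite /= mul0r subr0. Qed.

Lemma Im_rCM c (x : R[i]) : complex.Im (rC c * x) = c * complex.Im x.
Proof. by case: x => ? ?; rewrite /= mul0r addr0. Qed.

Lemma rinnerC u v : rinner u v = rinner v u.
Proof. by apply: eq_bigr => j _; rewrite mulrC [X in _ + X]mulrC. Qed.

Lemma rinnerDl u v a : rinner (u + v) a = rinner u a + rinner v a.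
Proof. rewrite /rinner -big_split; apply: eq_bigr => j _; rewrite !mxE !raddfD /=; ring. Qed.

Lemma rinnerNl u a : rinner (- u) a = - rinner u a.
Proof. rewrite /rinner -sumrN; apply: eq_bigr => j _; rewrite !mxE !raddfN /=; ring. Qed.

Lemma rinnerZl c u a : rinner (rC c *: u) a = c * rinner u a.
Proof. rewrite /rinner mulr_sumr; apply: eq_bigr => j _; rewrite !mxE Re_rCM Im_rCM; ring. Qed.

Lemma rinnerBl u v a : rinner (u - v) a = rinner u a - rinner v a.
Proof. by rewrite rinnerDl rinnerNl. Qed.

Lemma rinner0l a : rinner 0 a = 0.
Proof. by rewrite -(subrr a) rinnerBl subrr. Qed.

Lemma rinnerDr u v a : rinner a (u + v) = rinner a u + rinner a v.
Proof. by rewrite rinnerC rinnerDl !(rinnerC a). Qed.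

Lemma rinnerNr u a : rinner a (- u) = - rinner a u.
Proof. by rewrite rinnerC rinnerNl rinnerC. Qed.

Lemma rinnerBr u v a : rinner a (u - v) = rinner a u - rinner a v.
Proof. by rewrite rinnerDr rinnerNr. Qed.

Lemma rinnerZr c u a : rinner a (rC c *: u) = c * rinner a u.
Proof. by rewrite rinnerC rinnerZl rinnerC. Qed.

Lemma rinner_suml k (F : 'I_k -> V) a :
  rinner (\sum_(i < k) F i) a = \sum_(i < k) rinner (F i) a.
Proof. exact: (big_morph (fun u => rinner u a) (fun u v => rinnerDl u v a) (rinner0l a)). Qed.

Lemma rinner_ge0 u : 0 <= rinner u u.
Proof. by apply: sumr_ge0 => j _; rewrite -!expr2 addr_ge0 ?sqr_ge0. Qed.

Definition l1norm u : R :=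
  \sum_(j < n) (`|complex.Re (u ord0 j)| + `|complex.Im (u ord0 j)|).

Lemma l1norm_ge0 u : 0 <= l1norm u.
Proof. by apply: sumr_ge0 => j _; rewrite addr_ge0. Qed.

Lemma l1normN u : l1norm (- u) = l1norm u.
Proof. by apply: eq_bigr => j _; rewrite !mxE !raddfN /= !normrN. Qed.

Lemma l1normB u v : l1norm (u - v) = l1norm (v - u).
Proof. by rewrite -l1normN opprB. Qed.

Lemma rinner_le_l1norm u v (M : R) :
  (forall j, `|complex.Re (v ord0 j)| <= M /\ `|complex.Im (v ord0 j)| <= M) ->
  rinner u v <= M * l1norm u.
Proof.
move=> vM; rewrite /l1norm mulr_sumr; apply: ler_sum => j _.
have [vRe vIm] := vM j; rewrite mulrDr.
by apply: lerD; apply: le_trans (ler_norm _) _;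
  rewrite normrM mulrC ler_wpM2r.
Qed.

Lemma l2norm_ge0 u : 0 <= l2norm u. Proof. exact: sqrtr_ge0. Qed.

Lemma l2norm_sqr u : l2norm u ^+ 2 = rinner u u.
Proof. by rewrite sqr_sqrtr ?rinner_ge0. Qed.

Lemma coord_le_l2norm v j :
  `|complex.Re (v ord0 j)| <= l2norm v /\ `|complex.Im (v ord0 j)| <= l2norm v.
Proof.
have coord_le : complex.Re (v ord0 j) ^+ 2 + complex.Im (v ord0 j) ^+ 2 <= rinner v v.
  rewrite /rinner (bigD1 j) //= -!expr2 lerDl.
  by apply: sumr_ge0 => i _; rewrite -!expr2 addr_ge0 ?sqr_ge0.
by split; rewrite -sqrtr_sqr ler_sqrt ?rinner_ge0 //; apply: le_trans coord_le;
  rewrite ?lerDl ?lerDr sqr_ge0.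
Qed.

Lemma rinner_le_l1norm_l2norm u v : rinner u v <= l2norm v * l1norm u.
Proof. exact/rinner_le_l1norm/coord_le_l2norm. Qed.

Lemma rinner_le_l2norm u v : rinner u v <= l2norm u * l2norm v.
Proof.
have [a0|a_neq0] := eqVneq (l2norm u) 0.
  by rewrite a0 mul0r rinnerC; apply: le_trans (rinner_le_l1norm_l2norm v u) _;
    rewrite a0 mul0r.
have [b0|b_neq0] := eqVneq (l2norm v) 0.
  by rewrite b0 mulr0; apply: le_trans (rinner_le_l1norm_l2norm u v) _;
    rewrite b0 mul0r.
have a_gt0 : 0 < l2norm u by rewrite lt_def a_neq0 l2norm_ge0.
have b_gt0 : 0 < l2norm v by rewrite lt_def b_neq0 l2norm_ge0.
have := rinner_ge0 (rC (l2norm v) *: u - rC (l2norm u) *: v).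
rewrite !(rinnerBl, rinnerBr, rinnerZl, rinnerZr) -!l2norm_sqr (rinnerC v u) => expand_ge0.
by rewrite -(ler_pM2l (mulr_gt0 a_gt0 b_gt0)); nra.
Qed.

Lemma ler_l2normD u v : l2norm (u + v) <= l2norm u + l2norm v.
Proof.
rewrite -ler_sqr ?nnegrE ?addr_ge0 ?l2norm_ge0 //.
rewrite l2norm_sqr !(rinnerDl, rinnerDr) (rinnerC v u) sqrrD -!l2norm_sqr.
have := rinner_le_l2norm u v; lra.
Qed.

Lemma l2normZ c u : l2norm (rC c *: u) = `|c| * l2norm u.
Proof.
by rewrite /l2norm rinnerZl rinnerZr mulrA -expr2 sqrtrM ?sqr_ge0 // sqrtr_sqr.
Qed.

End RealInnerProduct.

Lemma le0_of_le_small_multiples (R : realFieldType) (K q : R) : 0 <= q ->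
  (forall e, 0 < e < 1 -> K <= e * q) -> K <= 0.
Proof.
move=> q_ge0 small; rewrite leNgt; apply/negP => K_gt0.
have d_gt0 : 0 < K + q + 1 by lra.
have e_gt0 : 0 < K / (K + q + 1) by rewrite divr_gt0.
have e_lt1 : K / (K + q + 1) < 1 by rewrite ltr_pdivrMr // mul1r; lra.
have := small _ (introT andP (conj e_gt0 e_lt1)).
by rewrite mulrAC ler_pdivlMr //; nra.
Qed.

Section AtomicNorm.
Variables (R : realType) (n : nat) (A : set (Cvec R n)).
Local Notation V := (Cvec R n).
Hypothesis A_centrosymmetric : centrosymmetric A.
Variable r : R.
Hypotheses (r_gt0 : 0 < r) (ball_sub_convhull : forall x : V, l2norm x <= r -> convhull A x).

Lemma convhullN y : convhull A y -> convhull A (- y).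
Proof.
move=> [k [c [a [c_ge0 [c_sum1 [Aa ->]]]]]].
exists k, c, (fun i => - a i); do 2!split=> //; split; first by move=> i; apply: A_centrosymmetric.
by rewrite -sumrN; apply: eq_bigr => i _; rewrite scalerN.
Qed.

Lemma convhull_convex (l : R) y1 y2 : 0 <= l <= 1 ->
  convhull A y1 -> convhull A y2 -> convhull A (rC l *: y1 + rC (1 - l) *: y2).
Proof.
move=> /andP[l_ge0 l_le1] [k1 [c1 [a1 [c1_ge0 [c1_sum [Aa1 ->]]]]]]
  [k2 [c2 [a2 [c2_ge0 [c2_sum [Aa2 ->]]]]]].
have splitl (i : 'I_k1) : fintype.split (lshift k2 i) = inl i := unsplitK (inl i).
have splitr (i : 'I_k2) : fintype.split (rshift k1 i) = inr i := unsplitK (inr i).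
exists (k1 + k2)%N,
  (fun i => match fintype.split i with inl i1 => l * c1 i1 | inr i2 => (1 - l) * c2 i2 end),
  (fun i => match fintype.split i with inl i1 => a1 i1 | inr i2 => a2 i2 end).
split; first by move=> i; case: (fintype.split i) => j; rewrite mulr_ge0 ?subr_ge0.
split.
  rewrite big_split_ord /=.
  under eq_bigr do rewrite splitl. under [X in _ + X]eq_bigr do rewrite splitr.
  by rewrite -!mulr_sumr c1_sum c2_sum; ring.
split; first by move=> i; case: (fintype.split i) => j; [apply: Aa1 | apply: Aa2].
rewrite big_split_ord /=.
under [X in _ = X + _]eq_bigr do rewrite splitl.
under [X in _ = _ + X]eq_bigr do rewrite splitr.
by rewrite !scaler_sumr; congr (_ + _); apply: eq_bigr => i _; rewrite scalerA rCM.
Qed.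

Lemma convhull_rinner_le (u : V) D y : (forall a, A a -> rinner u a <= D) ->
  convhull A y -> rinner u y <= D.
Proof.
move=> uD [k [c [a [c_ge0 [c_sum1 [Aa ->]]]]]].
rewrite rinnerC rinner_suml; apply: le_trans (_ : \sum_(i < k) c i * D <= _).
  by apply: ler_sum => i _; rewrite rinnerZl rinnerC ler_wpM2l ?uD.
by rewrite -mulr_suml c_sum1 mul1r.
Qed.

Let scales (x : V) := [set t : R | 0 < t /\ exists y, convhull A y /\ x = rC t *: y].

Let scales_neq0 x : scales x !=set0.
Proof.
have [x0|x_neq0] := eqVneq (l2norm x) 0.
  exists 1; split=> //; exists x; split; last by rewrite scale1r.
  by apply: ball_sub_convhull; rewrite x0 ltW.
have x_gt0 : 0 < l2norm x by rewrite lt_def x_neq0 l2norm_ge0.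
exists (l2norm x / r); split; first by rewrite divr_gt0.
exists (rC (r / l2norm x) *: x); split.
  apply: ball_sub_convhull; rewrite l2normZ ger0_norm ?divfK ?gt_eqF //.
  by rewrite divr_ge0 // ltW.
by rewrite scalerA -rCM mulrA divfK ?gt_eqF // divff ?gt_eqF // scale1r.
Qed.

Lemma atomic_norm_ge0 x : 0 <= atomic_norm A x.
Proof. by apply: lb_le_inf (scales_neq0 x) _ => t [/ltW]. Qed.

Lemma atomic_norm_le x t (y : V) : 0 < t -> convhull A y -> x = rC t *: y ->
  atomic_norm A x <= t.
Proof.
move=> t_gt0 Ay ->; apply: ge_inf; last by split=> //; exists y.
by exists 0 => s [/ltW].
Qed.

Lemma atomic_norm_glb x v :
  (forall t y, 0 < t -> convhull A y -> x = rC t *: y -> v <= t) ->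
  v <= atomic_norm A x.
Proof. by move=> glb; apply: lb_le_inf (scales_neq0 x) _ => t [t_gt0 [y [/glb]]]; apply. Qed.

Lemma atomic_normD_le x1 x2 :
  atomic_norm A (x1 + x2) <= atomic_norm A x1 + atomic_norm A x2.
Proof.
suff key s t : scales x1 s -> scales x2 t -> atomic_norm A (x1 + x2) <= s + t.
  have le_x2 : atomic_norm A (x1 + x2) - atomic_norm A x1 <= atomic_norm A x2.
    apply: atomic_norm_glb => t y2 t_gt0 Ay2 x2E; rewrite lerBlDr -lerBlDl.
    apply: atomic_norm_glb => s y1 s_gt0 Ay1 x1E; rewrite lerBlDl (addrC t).
    by apply: key; split=> //; [exists y1 | exists y2].
  by rewrite -lerBlDl.
move=> [s_gt0 [y1 [Ay1 ->]]] [t_gt0 [y2 [Ay2 ->]]].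
have st_neq0 : s + t != 0 by rewrite gt_eqF // addr_gt0.
apply: (atomic_norm_le (y := rC (s / (s + t)) *: y1 + rC (1 - s / (s + t)) *: y2)).
- exact: addr_gt0.
- apply: convhull_convex => //; apply/andP; split; first by rewrite divr_ge0 ?addr_ge0 ?ltW.
  by rewrite ler_pdivrMr ?addr_gt0 // mul1r lerDl ltW.
- by rewrite scalerDr !scalerA -!rCM; congr (rC _ *: _ + rC _ *: _); field.
Qed.

Lemma atomic_normZ_le (c : R) x : 0 < c -> atomic_norm A (rC c *: x) <= c * atomic_norm A x.
Proof.
move=> c_gt0; rewrite -ler_pdivrMl //; apply: atomic_norm_glb => t y t_gt0 Ay ->.
rewrite ler_pdivrMl //; apply: (atomic_norm_le (y := y)) => //; first exact: mulr_gt0.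
by rewrite scalerA -rCM.
Qed.

Lemma atomic_normN_le x : atomic_norm A (- x) <= atomic_norm A x.
Proof.
apply: atomic_norm_glb => t y t_gt0 Ay ->.
by apply: (atomic_norm_le (y := - y)); rewrite ?scalerN //; apply: convhullN.
Qed.

Lemma atomic_norm_convex (e : R) p x : 0 < e < 1 ->
  atomic_norm A (rC (1 - e) *: p + rC e *: x) <=
  (1 - e) * atomic_norm A p + e * atomic_norm A x.
Proof.
move=> /andP[e_gt0 e_lt1]; apply: le_trans (atomic_normD_le _ _) _.
by apply: lerD; apply: atomic_normZ_le; lra.
Qed.

Lemma rinner_le_atomic_norm (u : V) D : 0 < D -> (forall a, A a -> rinner u a <= D) ->
  forall x, rinner u x <= D * atomic_norm A x.
Proof.
move=> D_gt0 uD x; rewrite -ler_pdivrMl //; apply: atomic_norm_glb => t y t_gt0 Ay ->.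
rewrite ler_pdivrMl // rinnerZr (mulrC D) ler_pM2l //.
exact: convhull_rinner_le.
Qed.

Section ASTSolution.
Variable tau : R.
Hypothesis tau_gt0 : 0 < tau.

(* First-order optimality, obtained by comparing p with the convex combinations
   (1 - e) p + e x and letting e -> 0. *)
Lemma AST_solution_variational (y p x : V) : is_AST_solution A tau y p ->
  rinner (y - p) (x - p) <= tau * (atomic_norm A x - atomic_norm A p).
Proof.
move=> p_opt; rewrite -subr_le0.
apply: (@le0_of_le_small_multiples _ _ (2^-1 * rinner (x - p) (x - p))).
  by rewrite mulr_ge0 ?invr_ge0 ?rinner_ge0.
move=> e /andP[e_gt0 e_lt1].
have -> : rinner (y - p) (x - p) = - rinner (p - y) (x - p) by rewrite -rinnerNl opprB.
have comb_y : rC (1 - e) *: p + rC e *: x - y = (p - y) + rC e *: (x - p).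
  rewrite rC1B scalerBl scale1r scalerBr -!addrA; congr (_ + _).
  by rewrite addrCA [RHS]addrCA; congr (_ + _); exact: addrC.
have := p_opt (rC (1 - e) *: p + rC e *: x); rewrite comb_y !l2norm_sqr.
have := atomic_norm_convex p x (introT andP (conj e_gt0 e_lt1)).
set a := p - y; set d := x - p.
rewrite (rinnerDl a (rC e *: d)) (rinnerDr a (rC e *: d) a) (rinnerDr a (rC e *: d) (rC e *: d)).
rewrite !rinnerZl !rinnerZr (rinnerC d a).
set ad := rinner a d; set q := rinner d d.
set np := atomic_norm A p; set nx := atomic_norm A x; set nxe := atomic_norm A _.
move=> conv opt.
have : 0 <= e * (ad + e * (2^-1 * q) + tau * (nx - np)).
  have : tau * nxe <= tau * ((1 - e) * np + e * nx) by rewrite ler_pM2l.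
  move: opt; nra.
by rewrite pmulr_rge0 //; lra.
Qed.

Lemma AST_solution_nonexpansive (y1 y2 p1 p2 : V) :
  is_AST_solution A tau y1 p1 -> is_AST_solution A tau y2 p2 ->
  l2norm (p1 - p2) <= l1norm (y1 - y2).
Proof.
move=> p1_opt p2_opt.
have sqr_le : l2norm (p1 - p2) ^+ 2 <= l2norm (p1 - p2) * l1norm (y1 - y2).
  apply: le_trans (rinner_le_l1norm_l2norm _ _); rewrite rinnerC l2norm_sqr.
  have := AST_solution_variational p2 p1_opt; have := AST_solution_variational p1 p2_opt.
  rewrite !(rinnerBl, rinnerBr).
  have := rinnerC p1 p2; have := rinnerC p1 y1; have := rinnerC p2 y1;
  have := rinnerC p1 y2; have := rinnerC p2 y2; lra.
have [->|l2_neq0] := eqVneq (l2norm (p1 - p2)) 0; first exact: l1norm_ge0.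
have l2_gt0 : 0 < l2norm (p1 - p2) by rewrite lt_def l2_neq0 l2norm_ge0.
by rewrite -(ler_pM2l l2_gt0) -expr2.
Qed.

Lemma phi_gamma_le (gamma : R) (xs z : V) : C_gamma gamma xs A z -> z != 0 ->
  phi_gamma gamma xs A <= l2norm z / atomic_norm A z.
Proof.
move=> z_cone z_neq0; apply: ge_inf; last by exists z.
by exists 0 => _ [v _ <-]; rewrite divr_ge0 ?l2norm_ge0 ?atomic_norm_ge0.
Qed.

Lemma AST_solution_error_cone (gamma : R) (xs w p : V) : 0 < gamma ->
  (forall a, A a -> rinner w a <= gamma * tau) -> is_AST_solution A tau (xs + w) p ->
  C_gamma gamma xs A (p - xs) /\
  l2norm (p - xs) ^+ 2 <= (1 + gamma) * tau * atomic_norm A (p - xs).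
Proof.
move=> gamma_gt0 w_le p_opt; set z := p - xs.
have p_eq : p = xs + z by rewrite /z addrC subrK.
have := AST_solution_variational xs p_opt.
have -> : xs + w - p = w - z by rewrite p_eq opprD addrACA subrr add0r.
have -> : xs - p = - z by rewrite /z opprB.
rewrite rinnerBl !rinnerNr opprK => var.
have wz := rinner_le_atomic_norm (mulr_gt0 gamma_gt0 tau_gt0) w_le z.
have zz_ge0 := rinner_ge0 z.
split.
  exists 1, z; split=> //; split; last by rewrite scale1r.
  by rewrite /= -p_eq -(ler_pM2l tau_gt0); lra.
have an_tri : atomic_norm A xs <= atomic_norm A p + atomic_norm A z.
  have -> : xs = p + - z by rewrite p_eq addrK.
  by apply: le_trans (atomic_normD_le _ _) _; rewrite lerD2l atomic_normN_le.
have : tau * (atomic_norm A xs - atomic_norm A p) <= tau * atomic_norm A z.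
  by rewrite ler_pM2l //; lra.
by rewrite l2norm_sqr; lra.
Qed.

Lemma AST_solution_error_le (gamma : R) (xs w p : V) : 0 < gamma ->
  (forall a, A a -> rinner w a <= gamma * tau) ->
  is_AST_solution A tau (xs + w) p -> 0 < phi_gamma gamma xs A ->
  l2norm (p - xs) <= (1 + gamma) * tau / phi_gamma gamma xs A.
Proof.
move=> gamma_gt0 w_le p_opt phi_gt0.
have [z_cone sqr_le] := AST_solution_error_cone gamma_gt0 w_le p_opt.
move: z_cone sqr_le; set z := p - xs => z_cone sqr_le.
have [->|l2_neq0] := eqVneq (l2norm z) 0.
  by rewrite divr_ge0 ?mulr_ge0 ?addr_ge0 ?ltW.
have l2_gt0 : 0 < l2norm z by rewrite lt_def l2_neq0 l2norm_ge0.
have z_neq0 : z != 0 by apply: contra_neq l2_neq0 => ->; rewrite /l2norm rinner0l sqrtr0.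
have phi_le := phi_gamma_le z_cone z_neq0.
have an_gt0 : 0 < atomic_norm A z.
  rewrite lt_def atomic_norm_ge0 andbT; apply: contraTneq phi_le => ->.
  by rewrite invr0 mulr0 -ltNge.
rewrite ler_pdivlMr // in phi_le.
rewrite ler_pdivlMr // -(ler_pM2l l2_gt0) mulrA -expr2.
apply: le_trans (ler_wpM2r (ltW phi_gt0) sqr_le) _.
by rewrite [X in _ <= X]mulrC -!mulrA !ler_pM2l ?addr_gt0 // mulrC.
Qed.

End ASTSolution.

End AtomicNorm.

Section Atoms.
Variables (R : realType) (n : nat) (A : set (Cvec R n)).
Local Notation V := (Cvec R n).

Lemma atoms_neq0 (r : R) : 0 < r -> (forall x : V, l2norm x <= r -> convhull A x) ->
  A !=set0.
Proof.
move=> r_gt0 ball_sub.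
have : convhull A 0 by apply: ball_sub; rewrite /l2norm rinner0l sqrtr0 ltW.
case=> [[|k]] [c [a [_ [c_sum1 [Aa _]]]]]; last by exists (a ord0).
by move: c_sum1; rewrite big_ord0 => /eqP; rewrite eq_sym oner_eq0.
Qed.

Lemma atoms_bounded : compact (@realify R n @` convhull A) ->
  exists2 M : R, 0 <= M & forall a, A a -> forall j,
    `|complex.Re (a ord0 j)| <= M /\ `|complex.Im (a ord0 j)| <= M.
Proof.
move=> /compact_bounded [M0 [_ M0_bound]].
have /M0_bound realify_bound : `|M0| + 1 > M0 by rewrite (le_lt_trans (ler_norm _)) ?ltrDl.
exists (`|M0| + 1); first by rewrite addr_ge0.
move=> a Aa j.
have a_conv : convhull A a.
  exists 1%N, (fun _ => 1), (fun _ => a); split=> //; rewrite big_ord1.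
  by do 2!split=> //; rewrite big_ord1 scale1r.
have /= := realify_bound (realify a) (ex_intro2 _ _ a a_conv erefl).
move=> /(le_trans _) entry_le.
have entry k : `|realify a ord0 k| <= `|M0| + 1.
  by apply: entry_le; rewrite [X in _ <= X]mx_normrE; exact: (le_bigmax _ _ (ord0, k)).
have := entry (lshift n j); have := entry (rshift n j).
by rewrite /realify !mxE (unsplitK (inl _)) (unsplitK (inr _)) !mxE.
Qed.

End Atoms.

Section DualAtomicNorm.
Variables (R : realType) (n : nat) (A : set (Cvec R n)) (M : R).
Local Notation V := (Cvec R n).
Hypotheses (A_neq0 : A !=set0)
  (A_bounded : forall a, A a -> forall j,
     `|complex.Re (a ord0 j)| <= M /\ `|complex.Im (a ord0 j)| <= M).

Lemma dual_atomic_norm_ub (u a : V) : A a -> rinner u a <= dual_atomic_norm A u.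
Proof.
move=> Aa; apply: sup_upper_bound; last by exists a.
split; first by have [a0 Aa0] := A_neq0; exists (rinner u a0), a0.
by exists (M * l1norm u) => _ [b Ab <-]; exact/rinner_le_l1norm/A_bounded.
Qed.

Lemma dual_atomic_norm_le (u : V) D : (forall a, A a -> rinner u a <= D) ->
  dual_atomic_norm A u <= D.
Proof.
move=> uD; apply: ge_sup; first by have [a0 Aa0] := A_neq0; exists (rinner u a0), a0.
by move=> _ [b Ab <-]; exact: uD.
Qed.

Lemma dual_atomic_norm_ge0 (u : V) : centrosymmetric A -> 0 <= dual_atomic_norm A u.
Proof.
move=> A_sym; have [a0 Aa0] := A_neq0.
have := dual_atomic_norm_ub u Aa0; have := dual_atomic_norm_ub u (A_sym _ Aa0).
by rewrite rinnerC rinnerNl rinnerC; lra.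
Qed.

Lemma dual_atomic_norm_lipschitz (u v : V) :
  dual_atomic_norm A u <= dual_atomic_norm A v + M * l1norm (u - v).
Proof.
apply: dual_atomic_norm_le => a Aa.
have -> : rinner u a = rinner v a + rinner (u - v) a by rewrite rinnerBl addrC subrK.
by rewrite lerD ?dual_atomic_norm_ub //; exact/rinner_le_l1norm/A_bounded.
Qed.

End DualAtomicNorm.

Lemma floor_eq_dist (R : realType) (x y : R) :
  Num.floor x = Num.floor y -> `|x - y| < 1.
Proof.
move=> fxy; have := floor_le x; have := floorD1_gt x.
have := floor_le y; have := floorD1_gt y.
rewrite -fxy intrD ltr_norml; move: (_%:~R) => F; lra.
Qed.

Section GridCells.
Variables (R : realType) (n : nat).
Local Notation V := (Cvec R n).

Definition grid_cell (k : nat) (v : V) : {ffun 'I_n -> int * int} :=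
  [ffun j => (Num.floor (k.+1%:R * complex.Re (v ord0 j)),
              Num.floor (k.+1%:R * complex.Im (v ord0 j)))].

Lemma grid_cell_l1norm k (v v' : V) : grid_cell k v = grid_cell k v' ->
  l1norm (v - v') <= (n.*2)%:R / k.+1%:R.
Proof.
move=> same_cell; have k_gt0 : 0 < k.+1%:R :> R by rewrite ltr0n.
have coord (x y : R) : Num.floor (k.+1%:R * x) = Num.floor (k.+1%:R * y) ->
    `|x - y| <= k.+1%:R^-1.
  move=> /floor_eq_dist; rewrite -mulrBr normrM gtr0_norm // => lt1.
  by rewrite -[_^-1]mul1r ler_pdivlMr // mulrC ltW.
apply: le_trans (_ : \sum_(j < n) k.+1%:R^-1 *+ 2 <= _); last first.
  by rewrite sumr_const card_ord -mulrnA mulr_natl mulnC muln2.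
apply: ler_sum => j _; rewrite !mxE !raddfB /= mulr2n.
move: same_cell => /ffunP/(_ j); rewrite !ffunE => -[fRe fIm].
by rewrite lerD ?coord.
Qed.

End GridCells.

Section L1LipschitzMeasurable.
Variables (R : realType) (n : nat) (d : measure_display) (T : measurableType d)
  (w : T -> Cvec R n).
Local Notation V := (Cvec R n).

Lemma l1norm_dense_sequence (s0 : T) : exists u : nat -> T,
  forall s e, 0 < e -> exists k, l1norm (w s - w (u k)) <= e.
Proof.
pose rep (i : nat * {ffun 'I_n -> int * int}) : T :=
  if pselect (exists s, grid_cell i.1 (w s) = i.2) is left ex then projT1 (cid ex) else s0.
exists (fun k => if unpickle k is Some i then rep i else s0) => s e e_gt0.
have [k k_small] : exists k, 0 + k.+1%:R^-1 < e / (n.*2.+1)%:R.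
  by apply: ltr_add_invr; rewrite divr_gt0 ?ltr0n.
exists (pickle (k, grid_cell k (w s))); rewrite pickleK /rep /=.
case: pselect => [ex|]; last by case; exists s.
case: (cid ex) => s' /= cell_eq.
apply: le_trans (grid_cell_l1norm (esym cell_eq)) _.
rewrite add0r ltr_pdivlMr ?ltr0n // in k_small; apply/ltW/(le_lt_trans _ k_small).
by rewrite mulrC ler_pM2l ?invr_gt0 ?ltr0n // ler_nat.
Qed.

Hypothesis w_measurable : forall j : 'I_n,
  measurable_fun setT (fun s => complex.Re (w s ord0 j)) /\
  measurable_fun setT (fun s => complex.Im (w s ord0 j)).

Lemma measurable_l1norm_dist (v : V) : measurable_fun setT (fun s => l1norm (w s - v)).
Proof.
rewrite /l1norm; under eq_fun do under eq_bigr do rewrite !mxE !raddfB /=.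
apply: measurable_sum => j; have [mRe mIm] := w_measurable j.
by apply: measurable_funD; apply: measurableT_comp => //; apply: measurable_funB.
Qed.

(* f is not assumed to be a measurable function of w (xh is arbitrary); the set
   f <= B is recovered from f along a countable sample of T whose image under w
   is dense. *)
Lemma l1lipschitz_measurable_le (f : T -> R) (L : R) : 0 <= L ->
  (forall s s', f s <= f s' + L * l1norm (w s - w s')) ->
  forall B, measurable [set s | f s <= B].
Proof.
move=> L_ge0 f_lip B.
have [[s0 _]|T0] := pselect (exists s : T, True); last first.
  suff -> : [set s | f s <= B] = set0 by [].
  by apply/seteqP; split=> s // _; apply: T0; exists s.
have [u u_dense] := l1norm_dense_sequence s0.
pose sample_bound m k := [set s | f (u k) + L * l1norm (w s - w (u k)) < B + m.+1%:R^-1].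
suff -> : [set s | f s <= B] = \bigcap_m \bigcup_k sample_bound m k.
  apply: bigcapT_measurable => m; apply: bigcupT_measurable => k.
  have mg : measurable_fun setT (fun s => f (u k) + L * l1norm (w s - w (u k))).
    by apply: measurable_funD => //; apply: measurable_funM => //;
      exact: measurable_l1norm_dist.
  have := mg measurableT _ (measurable_itv `]-oo, B + m.+1%:R^-1[); rewrite setTI.
  by congr measurable; apply/seteqP; split=> s /=; rewrite in_itv.
apply/seteqP; split => s /=.
- move=> fs_le m _; pose e := m.+1%:R^-1 / (L *+ 2 + 1).
  have L21_gt0 : 0 < L *+ 2 + 1 by rewrite ltr_wpDl ?mulrn_wge0.
  have e_gt0 : 0 < e by rewrite divr_gt0 ?invr_gt0 ?ltr0n.
  have e_def : e * (L *+ 2 + 1) = m.+1%:R^-1 by rewrite divfK ?gt_eqF.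
  have [k k_close] := u_dense s e e_gt0; exists k => //=.
  have := f_lip (u k) s; rewrite l1normB.
  have : L * l1norm (w s - w (u k)) <= L * e by rewrite ler_wpM2l.
  rewrite /sample_bound /= mulr2n !mulrDr mulr1 (mulrC e L) in e_def *.
  move: (L * _) (L * e) (m.+1%:R^-1) e_def => LN Le c; lra.
- move=> in_all; rewrite leNgt; apply/negP => /ltr_add_invr[m B_lt].
  have [k _ near_k] := in_all m I; have := f_lip s (u k).
  move: near_k B_lt; rewrite /sample_bound /=.
  by move: (L * _) (m.+1%:R^-1) => LN c; lra.
Qed.

End L1LipschitzMeasurable.

Lemma probability_ge_of_setC_sub (d : measure_display) (T : measurableType d)
  (R : realType) (P : probability T R) (E S : set T) (p : R) :
  measurable E -> measurable S -> ~` E `<=` S -> (P S < p%:E)%E ->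
  ((1 - p)%:E <= P E)%E.
Proof.
move=> mE mS notE_sub PS_lt.
have PnotE_lt : (P (~` E) < p%:E)%E.
  by apply: le_lt_trans PS_lt; apply: le_measure; rewrite ?inE //; exact: measurableC.
have PnotE_ge0 : (0 <= P (~` E))%E by exact: measure_ge0.
rewrite -[E]setCK probability_setC ?setCK; last exact: measurableC.
move: PnotE_ge0 PnotE_lt; case: (P (~` E)) => [x| |] //= _.
by rewrite lte_fin -EFinB lee_fin; lra.
Qed.

Section NoiseEvents.
Variables (R : realType) (n : nat) (A : set (Cvec R n)) (d : measure_display)
  (T : measurableType d) (w : T -> Cvec R n).
Hypothesis w_measurable : forall j : 'I_n,
  measurable_fun setT (fun s => complex.Re (w s ord0 j)) /\
  measurable_fun setT (fun s => complex.Im (w s ord0 j)).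

Lemma measurable_dual_atomic_norm_ge (M b : R) : A !=set0 -> 0 <= M ->
  (forall a, A a -> forall j,
     `|complex.Re (a ord0 j)| <= M /\ `|complex.Im (a ord0 j)| <= M) ->
  measurable [set s | b <= dual_atomic_norm A (w s)].
Proof.
move=> A_neq0 M_ge0 A_bounded.
rewrite (_ : [set s | _] = [set s | - dual_atomic_norm A (w s) <= - b]); last first.
  by apply/seteqP; split=> s /=; rewrite lerN2.
apply: (l1lipschitz_measurable_le w_measurable M_ge0) => s s'.
have := dual_atomic_norm_lipschitz A_neq0 A_bounded (w s') (w s).
by rewrite l1normB; lra.
Qed.

Lemma measurable_AST_error_le (r tau : R) (xs : Cvec R n) (xh : T -> Cvec R n) (c : R) :
  0 < r -> (forall x, l2norm x <= r -> convhull A x) -> 0 < tau ->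
  (forall s, is_AST_solution A tau (xs + w s) (xh s)) ->
  measurable [set s | l2norm (xh s - xs) <= c].
Proof.
move=> r_gt0 ball_sub tau_gt0 xh_opt.
apply: (l1lipschitz_measurable_le w_measurable ler01) => s s'; rewrite mul1r.
have -> : xh s - xs = (xh s' - xs) + (xh s - xh s') by rewrite [RHS]addrC addrA subrK.
apply: le_trans (ler_l2normD _ _) _; rewrite lerD2l.
have := AST_solution_nonexpansive r_gt0 ball_sub tau_gt0 (xh_opt s) (xh_opt s').
by rewrite opprD addrACA subrr add0r.
Qed.

End NoiseEvents.

Unset Implicit Arguments.

Theorem proposition2 (R : realType) (n : nat) (A : set (Cvec R n))
  (d : measure_display) (T : measurableType d) (P : probability T R)
  (xs : Cvec R n) (w : T -> Cvec R n) (delta : R -> R) (tau gamma : R) :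
  centrosymmetric A ->
  compact (@realify R n @` convhull A) ->
  (exists r : R, 0 < r /\ forall x, l2norm x <= r -> convhull A x) ->
  (forall j : 'I_n, measurable_fun setT (fun t => complex.Re (w t ord0 j)) /\
                    measurable_fun setT (fun t => complex.Im (w t ord0 j))) ->
  (\int[P]_t (dual_atomic_norm A (w t))%:E < +oo)%E ->
  let Ew := fine (\int[P]_t (dual_atomic_norm A (w t))%:E) in
  (forall t : R, 0 < t ->
     (P [set s | (Ew + t <= dual_atomic_norm A (w s))%R] < (delta t)%:E)%E) ->
  0 < tau ->
  0 <= gamma <= 1 ->
  Ew / tau < gamma ->
  0 < phi_gamma gamma xs A ->
  forall xh : T -> Cvec R n,
    (forall s, is_AST_solution A tau (xs + w s) (xh s)) ->
    ((1 - delta (gamma * tau - Ew))%:E <=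
       P [set s | (l2norm (xh s - xs) ^+ 2 <=
                  (1 + gamma) ^+ 2 * tau ^+ 2 / (gamma ^+ 2 * phi_gamma gamma xs A ^+ 2))%R])%E.
Proof.
move=> A_sym A_compact [r [r_gt0 ball_sub]] w_meas _ Ew noise_tail tau_gt0
  /andP[gamma_ge0 gamma_le1] Ew_lt phi_gt0 xh xh_opt.
have A_neq0 := atoms_neq0 r_gt0 ball_sub.
have [M M_ge0 A_bounded] := atoms_bounded A_compact.
have Ew_ge0 : 0 <= Ew.
  by apply/fine_ge0/integral_ge0 => s _; rewrite lee_fin (dual_atomic_norm_ge0 A_neq0 A_bounded).
have gamma_gt0 : 0 < gamma by apply: le_lt_trans Ew_lt; exact: divr_ge0 Ew_ge0 (ltW tau_gt0).
have margin_gt0 : 0 < gamma * tau - Ew by rewrite subr_gt0 -ltr_pdivrMr.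
have := noise_tail _ margin_gt0; rewrite addrC subrK => tail_lt.
set phi := phi_gamma gamma xs A in phi_gt0 *.
have -> : (1 + gamma) ^+ 2 * tau ^+ 2 / (gamma ^+ 2 * phi ^+ 2) =
          ((1 + gamma) * tau / (gamma * phi)) ^+ 2 by rewrite expr_div_n !exprMn.
set c := (1 + gamma) * tau / (gamma * phi).
have c_ge0 : 0 <= c by rewrite divr_ge0 ?mulr_ge0 ?addr_ge0 ?ltW.
have -> : [set s | l2norm (xh s - xs) ^+ 2 <= c ^+ 2] = [set s | l2norm (xh s - xs) <= c].
  by apply/seteqP; split=> s /=; rewrite ler_sqr ?nnegrE ?l2norm_ge0.
apply: probability_ge_of_setC_sub tail_lt.
- exact: (measurable_AST_error_le w_meas _ r_gt0 ball_sub tau_gt0 xh_opt).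
- exact: (measurable_dual_atomic_norm_ge w_meas _ A_neq0 M_ge0 A_bounded).
- move=> s /= notE; rewrite leNgt; apply/negP => dual_lt; apply: notE.
  apply: le_trans (_ : (1 + gamma) * tau / phi <= c).
    apply: (AST_solution_error_le A_sym r_gt0 ball_sub tau_gt0 gamma_gt0 _ (xh_opt s) phi_gt0).
    by move=> a Aa; apply/ltW/(le_lt_trans _ dual_lt); exact: (dual_atomic_norm_ub A_neq0 A_bounded).
  rewrite /c ler_pM2l ?mulr_gt0 ?addr_gt0 // lef_pV2 ?posrE ?mulr_gt0 //.
  exact: ler_piMl (ltW phi_gt0) gamma_le1.
Qed.
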